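(* Assume $\diamondsuit^+$. If $G$ is an undirected graph with $|V(G)|=\omega_1$, then $\vec\chi(G)=\omega_1$ if and only if $\chi(G)=\omega_1$.
   Context: $\diamondsuit^+$ is the statement that there are countable families $\mathcal S_\beta\subseteq\mathcal P(\beta)$, $\beta<\omega_1$, such that for every $X\subseteq\omega_1$ there is a club $C\subseteq\omega_1$ with $X\cap\beta,C\cap\beta\in\mathcal S_\beta$ for all $\beta\in C$. $\chi(G)$ is the chromatic number. $\vec\chi(G)=\sup\{\chi(D):D$ an orientation of $G\}$, where an orientation of $G$ is a digraph on $V(G)$ containing, for each edge $uv$ of $G$, exactly one of the arcs $uv,vu$ and no other arcs, and $\chi(D)$ (the dichromatic number) is the minimal number of acyclic vertex sets (sets inducing no directed cycle) covering $V(D)$. *)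

From Stdlib Require Import List.
Import ListNotations.

Definition countable (T : Type) : Prop :=
  exists f : T -> nat, forall x y, f x = f y -> x = y.

Definition injective_fun {A B : Type} (f : A -> B) : Prop :=
  forall x y, f x = f y -> x = y.

Definition bijective_fun {A B : Type} (f : A -> B) : Prop :=
  injective_fun f /\ forall b, exists a, f a = b.

Definition card_lt (K W : Type) : Prop :=
  (exists f : K -> W, injective_fun f) /\ ~ (exists g : W -> K, injective_fun g).

Record is_omega1 (W : Type) (lt : W -> W -> Prop) : Prop := {
  om_irrefl : forall a, ~ lt a a;
  om_trans  : forall a b c, lt a b -> lt b c -> lt a c;
  om_total  : forall a b, lt a b \/ a = b \/ lt b a;
  om_wf     : well_founded lt;
  om_uncountable : ~ countable W;
  om_segments_countable : forall b, countable {a : W | lt a b}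
}.

Definition club {W : Type} (lt : W -> W -> Prop) (C : W -> Prop) : Prop :=
  (forall a, exists c, C c /\ lt a c) /\
  (forall b, (exists c, C c /\ lt c b) ->
             (forall a, lt a b -> exists c, C c /\ lt a c /\ lt c b) ->
             C b).

(* diamond^+ : countable families S_beta (enumerated as S beta n, n : nat) of
   subsets of beta such that every X has a club C with X ∩ beta, C ∩ beta in
   S_beta for all beta in C. *)
Definition diamond_plus (W : Type) (lt : W -> W -> Prop) : Prop :=
  exists S : W -> nat -> (W -> Prop),
    (forall b n a, S b n a -> lt a b) /\
    forall X : W -> Prop, exists C : W -> Prop,
      club lt C /\
      forall b, C b ->
        (exists n, forall a, S b n a <-> (X a /\ lt a b)) /\
        (exists n, forall a, S b n a <-> (C a /\ lt a b)).

Definition undirected_graph {V : Type} (G : V -> V -> Prop) : Prop :=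
  (forall u v, G u v -> G v u) /\ (forall v, ~ G v v).

Definition colorable_by {V : Type} (G : V -> V -> Prop) (K : Type) : Prop :=
  exists c : V -> K, forall u v, G u v -> c u <> c v.

Definition chi_eq {V : Type} (G : V -> V -> Prop) (W : Type) : Prop :=
  colorable_by G W /\ forall K : Type, card_lt K W -> ~ colorable_by G K.

Definition orientation {V : Type} (G D : V -> V -> Prop) : Prop :=
  (forall u v, D u v -> G u v) /\
  (forall u v, G u v -> (D u v \/ D v u) /\ ~ (D u v /\ D v u)).

Fixpoint dpath {V : Type} (D : V -> V -> Prop) (x : V) (l : list V) : Prop :=
  match l with
  | [] => True
  | y :: l' => D x y /\ dpath D y l'
  end.

Definition has_dcycle_in {V : Type} (D : V -> V -> Prop) (A : V -> Prop) : Prop :=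
  exists (x : V) (l : list V),
    NoDup (x :: l) /\ Forall A (x :: l) /\ dpath D x l /\ D (last l x) x.

Definition acyclic_set {V : Type} (D : V -> V -> Prop) (A : V -> Prop) : Prop :=
  ~ has_dcycle_in D A.

Definition dicolorable_by {V : Type} (D : V -> V -> Prop) (K : Type) : Prop :=
  exists F : K -> (V -> Prop),
    (forall k, acyclic_set D (F k)) /\ (forall v, exists k, F k v).

(* vec-chi(G) = sup over orientations D of chi(D) equals |W|:
   |W| is an upper bound and no smaller cardinal is an upper bound. *)
Definition vec_chi_eq {V : Type} (G : V -> V -> Prop) (W : Type) : Prop :=
  (forall D, orientation G D -> dicolorable_by D W) /\
  (forall K : Type, card_lt K W ->
     exists D, orientation G D /\ ~ dicolorable_by D K).

From Stdlib Require Import List Classical ClassicalEpsilon FunctionalExtensionality.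
From Stdlib Require Import Cantor Lia PeanoNat Inverse_Image.
Import ListNotations.

(* A proper colouring is in particular a dicolouring of every orientation, and an
   injective colouring uses omega_1 colours; so everything reduces to showing that if G has no
   countable proper colouring, some orientation has no countable dicolouring.  Orient the edges from each vertex x to earlier vertices by a
   countable construction running through the countably many guesses at x: at each guess,
   orient one fresh guessed neighbour into x and another out of x, preferring a pair that closes
   a directed 4-cycle x -> b -> y -> a -> x through a guessed y.  Given a dicolouring with
   countably many acyclic classes, take for each class a club of points d at which the class
   below d is guessed and which are closed under directed 2-paths inside the class.  Then each
   x has only finitely many neighbours of its own class below any such d <= x, since otherwise
   the construction would have produced a monochromatic 4-cycle; and a graph on omega_1 with
   this local finiteness along a club is countably colourable. *)

Definition restrict {X A : Type} (R : X -> X -> Prop) (x : X) (a0 : A) (f : X -> A) : X -> A :=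
  fun y => if excluded_middle_informative (R y x) then f y else a0.

Lemma restrict_below {X A : Type} (R : X -> X -> Prop) x (a0 : A) f y :
  R y x -> restrict R x a0 f y = f y.
Proof. intro h. unfold restrict. destruct (excluded_middle_informative (R y x)); tauto. Qed.

(* Since [Phi] only sees [f] below [x], no extensionality condition on [Phi] is needed. *)
Lemma wf_recursion {X A : Type} (R : X -> X -> Prop) (Rwf : well_founded R) (a0 : A)
  (Phi : X -> (X -> A) -> A) :
  exists f : X -> A, forall x, f x = Phi x (restrict R x a0 f).
Proof.
  set (F := fun x (rec : forall y, R y x -> A) =>
    Phi x (fun y => match excluded_middle_informative (R y x) with
                    | left h => rec y h | right _ => a0 end)).
  exists (Fix Rwf (fun _ => A) F). intro x. rewrite Fix_eq; [reflexivity|].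
  intros x' g g' E. unfold F. f_equal. apply functional_extensionality. intro y.
  destruct (excluded_middle_informative (R y x')); auto.
Qed.

Lemma cantor_pair_inj (p q : nat * nat) : Cantor.to_nat p = Cantor.to_nat q -> p = q.
Proof. intro e. rewrite <- (Cantor.cancel_of_to p), <- (Cantor.cancel_of_to q), e. reflexivity. Qed.

Lemma le_list_max (l : list nat) n : In n l -> n <= list_max l.
Proof.
  intro h. pose proof (proj1 (list_max_le l _) (le_n _)) as H.
  rewrite Forall_forall in H. exact (H n h).
Qed.

Lemma infinite_avoid {A : Type} (P : A -> Prop) :
  ~ (exists l, forall a, P a -> In a l) -> forall l, exists a, P a /\ ~ In a l.
Proof.
  intros N l. apply NNPP. intro N'. apply N. exists l. intros a Pa.
  apply NNPP. intro h. apply N'. eauto.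
Qed.

Definition choose_opt {A : Type} (P : A -> Prop) : option A :=
  match excluded_middle_informative (exists a, P a) with
  | left h => Some (proj1_sig (constructive_indefinite_description _ h))
  | right _ => None
  end.

Lemma choose_opt_spec {A : Type} (P : A -> Prop) :
  match choose_opt P with Some a => P a | None => ~ exists a, P a end.
Proof.
  unfold choose_opt. destruct (excluded_middle_informative (exists a, P a)) as [h|h]; [|exact h].
  exact (proj2_sig (constructive_indefinite_description _ h)).
Qed.

Lemma nodup_fst_functional {A B : Type} (L : list (A * B)) a b b' :
  NoDup (map fst L) -> In (a, b) L -> In (a, b') L -> b = b'.
Proof.
  induction L as [|[a0 b0] L IH]; simpl; [tauto|].
  intros hn h1 h2. inversion hn as [|? ? hnin hn']; subst.
  destruct h1 as [h1|h1], h2 as [h2|h2].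
  - congruence.
  - injection h1 as -> ->. exfalso. apply hnin. exact (in_map fst _ (a, b') h2).
  - injection h2 as -> ->. exfalso. apply hnin. exact (in_map fst _ (a, b) h1).
  - exact (IH hn' h1 h2).
Qed.

Lemma has_dcycle_in_4 {V : Type} (D : V -> V -> Prop) (A : V -> Prop) x b y a :
  NoDup [x; b; y; a] -> A x -> A b -> A y -> A a ->
  D x b -> D b y -> D y a -> D a x -> has_dcycle_in D A.
Proof. intros. exists x, [b; y; a]. repeat split; auto. Qed.

Lemma acyclic_of_arcless {V : Type} (D : V -> V -> Prop) (A : V -> Prop) :
  (forall u v, A u -> A v -> ~ D u v) -> acyclic_set D A.
Proof.
  intros H [x [[|y l] [_ [HA [Hp Hl]]]]]; inversion HA as [|? ? Ax HA']; subst.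
  - exact (H x x Ax Ax Hl).
  - inversion HA' as [|? ? Ay _]; subst. exact (H x y Ax Ay (proj1 Hp)).
Qed.

Lemma acyclic_set_sub {V : Type} (D : V -> V -> Prop) (A B : V -> Prop) :
  (forall v, A v -> B v) -> acyclic_set D B -> acyclic_set D A.
Proof.
  intros HAB HB [x [l [hn [HA Hc]]]]. apply HB. exists x, l.
  split; [exact hn | split; [exact (Forall_impl _ HAB HA) | exact Hc]].
Qed.

Lemma dicolorable_of_colorable {V K : Type} (G D : V -> V -> Prop) :
  orientation G D -> colorable_by G K -> dicolorable_by D K.
Proof.
  intros [HDG _] [c Hc]. exists (fun k v => c v = k). split; [|intro v; now exists (c v)].
  intro k. apply acyclic_of_arcless. intros u v hu hv huv.
  apply (Hc u v (HDG u v huv)). congruence.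
Qed.

Lemma colorable_by_injection {V W : Type} (G : V -> V -> Prop) (f : V -> W) :
  (forall v, ~ G v v) -> injective_fun f -> colorable_by G W.
Proof.
  intros Hirr Hf. exists f. intros u v huv e. rewrite (Hf u v e) in huv. exact (Hirr v huv).
Qed.

Lemma dicolorable_nat_of_countable {V K : Type} (D : V -> V -> Prop) (h : K -> nat) :
  injective_fun h -> dicolorable_by D K ->
  exists c : V -> nat, forall n, acyclic_set D (fun v => c v = n).
Proof.
  intros Hh [F [HF Hcov]]. destruct (choice _ Hcov) as [ch Hch].
  exists (fun v => h (ch v)). intros n Hcyc. pose proof Hcyc as [x [l [_ [HA _]]]].
  inversion HA as [|? ? Hx _]; subst.
  refine (acyclic_set_sub D _ _ _ (HF (ch x)) Hcyc).
  intros v hv. rewrite <- (Hh _ _ hv). apply Hch.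
Qed.

Lemma colorable_nat_of_classes {V : Type} (G : V -> V -> Prop) (c : V -> nat) :
  (forall n, colorable_by (fun u v => G u v /\ c u = n /\ c v = n) nat) -> colorable_by G nat.
Proof.
  intro Hn. destruct (choice _ Hn) as [col Hcol].
  exists (fun v => Cantor.to_nat (c v, col (c v) v)). intros u v huv e.
  apply cantor_pair_inj in e. injection e as e1 e2. rewrite e1 in e2.
  exact (Hcol (c v) u v (conj huv (conj e1 eq_refl)) e2).
Qed.

Definition guesses_on_club {T : Type} (lt : T -> T -> Prop) (Sd : T -> nat -> T -> Prop) : Prop :=
  forall X : T -> Prop, exists C, club lt C /\
    forall b, C b -> exists n, forall a, Sd b n a <-> X a /\ lt a b.

Lemma diamond_plus_guesses {T : Type} (lt : T -> T -> Prop) :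
  diamond_plus T lt -> exists Sd, guesses_on_club lt Sd.
Proof.
  intros [Sd [_ HSd]]. exists Sd. intro X. destruct (HSd X) as [C [HC HCS]].
  exists C. split; [exact HC|]. intros b hb. exact (proj1 (HCS b hb)).
Qed.

Section Omega1.
Variables (T : Type) (lt : T -> T -> Prop).
Hypothesis HT : is_omega1 T lt.

Definition le a b := lt a b \/ a = b.

Lemma lt_irrefl a : ~ lt a a. Proof. exact (om_irrefl _ _ HT a). Qed.
Lemma lt_trans a b c : lt a b -> lt b c -> lt a c. Proof. exact (om_trans _ _ HT a b c). Qed.
Lemma le_refl a : le a a. Proof. now right. Qed.

Lemma le_lt_trans a b c : le a b -> lt b c -> lt a c.
Proof. intros [h| <-] h'; [exact (lt_trans _ _ _ h h') | exact h']. Qed.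

Lemma lt_le_trans a b c : lt a b -> le b c -> lt a c.
Proof. intros h [h'| <-]; [exact (lt_trans _ _ _ h h') | exact h]. Qed.

Lemma le_not_lt a b : le a b -> ~ lt b a.
Proof. intros h h'. exact (lt_irrefl _ (le_lt_trans _ _ _ h h')). Qed.

Lemma not_lt_le a b : ~ lt a b -> le b a.
Proof.
  intro h. destruct (om_total _ _ HT a b) as [h'|[->|h']];
    [contradiction | apply le_refl | now left].
Qed.

Lemma le_total a b : le a b \/ le b a.
Proof. destruct (classic (lt a b)) as [h|h]; [left; now left | right; now apply not_lt_le]. Qed.

Lemma le_antisym a b : le a b -> le b a -> a = b.
Proof. intros [h| ->] h'; [exact (False_ind _ (le_not_lt _ _ h' h)) | reflexivity]. Qed.

Lemma lt_wf_min (P : T -> Prop) : (exists x, P x) -> exists m, P m /\ forall y, P y -> ~ lt y m.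
Proof.
  intros [x Px]. induction x as [x IH] using (well_founded_ind (om_wf _ _ HT)).
  destruct (classic (exists y, P y /\ lt y x)) as [[y [Py hy]]|N].
  - exact (IH y hy Py).
  - exists x. split; [exact Px|]. intros y Py hy. apply N. eauto.
Qed.

Lemma omega1_inhabited : inhabited T.
Proof.
  apply NNPP. intro N. apply (om_uncountable _ _ HT). exists (fun _ => 0).
  intro x. exfalso. exact (N (inhabits x)).
Qed.

Lemma strict_mono_injective (h : T -> T) :
  (forall x y, lt x y -> lt (h x) (h y)) -> injective_fun h.
Proof.
  intros Hh x y e. destruct (om_total _ _ HT x y) as [h'|[h'|h']]; [|exact h'|];
    apply Hh in h'; rewrite e in h'; exact (False_ind _ (lt_irrefl _ h')).
Qed.

Definition seg_index (b : T) : T -> nat :=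
  let f := proj1_sig (constructive_indefinite_description _ (om_segments_countable _ _ HT b)) in
  fun a => match excluded_middle_informative (lt a b) with
           | left h => f (exist _ a h) | right _ => 0 end.

Lemma seg_index_inj b x y : lt x b -> lt y b -> seg_index b x = seg_index b y -> x = y.
Proof.
  unfold seg_index. destruct (constructive_indefinite_description _ _) as [f Hf]; simpl.
  intros hx hy. destruct (excluded_middle_informative (lt x b)); [|contradiction].
  destruct (excluded_middle_informative (lt y b)); [|contradiction].
  intro e. exact (f_equal (@proj1_sig _ _) (Hf _ _ e)).
Qed.

Lemma segment_enumerable x : exists e : nat -> T, forall d, le d x -> exists k, e k = d.
Proof.
  exists (fun k => match k with
           | 0 => x
           | S k => epsilon (inhabits x) (fun d => lt d x /\ seg_index x d = k) end).
  intros d [h| ->]; [|now exists 0].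
  exists (S (seg_index x d)).
  destruct (epsilon_spec (inhabits x) (fun d' => lt d' x /\ seg_index x d' = seg_index x d)
              (ex_intro _ d (conj h eq_refl))) as [h1 h2].
  exact (seg_index_inj x _ _ h1 h h2).
Qed.

(* If the sequence were cofinal, [a] would be coded injectively by some [k] with
   [a <= g k] together with the index of [a] in the countable segment below [g k]. *)
Lemma seq_bounded (g : nat -> T) : exists b, forall k, lt (g k) b.
Proof.
  apply NNPP; intro N.
  assert (Hcof : forall a, exists k, le a (g k)).
  { intro a. apply NNPP; intro N'. apply N. exists a. intro k.
    apply NNPP; intro h. apply N'. exists k. now apply not_lt_le. }
  destruct (choice _ Hcof) as [ka Hka].
  apply (om_uncountable _ _ HT).
  exists (fun a => Cantor.to_nat (ka a, match excluded_middle_informative (lt a (g (ka a))) with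
                                        | left _ => S (seg_index (g (ka a)) a) | right _ => 0 end)).
  intros x y e. apply cantor_pair_inj in e. injection e as e1 e2. rewrite <- e1 in e2.
  destruct (excluded_middle_informative (lt x (g (ka x)))) as [hx|hx];
  destruct (excluded_middle_informative (lt y (g (ka x)))) as [hy|hy]; try discriminate.
  - injection e2 as e2. exact (seg_index_inj _ _ _ hx hy e2).
  - destruct (Hka x) as [h| ->]; [contradiction|].
    destruct (Hka y) as [h| ->]; rewrite <- e1 in *; [contradiction | reflexivity].
Qed.

Lemma upper_bound2 a b : exists c, lt a c /\ lt b c.
Proof.
  destruct (seq_bounded (fun k => match k with 0 => a | _ => b end)) as [c Hc].
  exists c. exact (conj (Hc 0) (Hc 1)).
Qed.

Lemma segment_image_bounded (g : T -> T) x : exists b, forall y, lt y x -> lt (g y) b.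
Proof.
  destruct (segment_enumerable x) as [e He]. destruct (seq_bounded (fun k => g (e k))) as [b Hb].
  exists b. intros y hy. destruct (He y (or_introl hy)) as [k <-]. apply Hb.
Qed.

Lemma seq_sup (g : nat -> T) :
  exists b, (forall k, lt (g k) b) /\ forall a, lt a b -> exists k, le a (g k).
Proof.
  destruct (lt_wf_min _ (seq_bounded g)) as [b [Hb Hmin]].
  exists b. split; [exact Hb|]. intros a ha. apply NNPP; intro N.
  apply (Hmin a); [|exact ha]. intro k. apply NNPP; intro h. apply N. exists k. now apply not_lt_le.
Qed.

Lemma increasing_seq_lt (g : nat -> T) :
  (forall k, lt (g k) (g (S k))) -> forall i j, i < j -> lt (g i) (g j).
Proof. intros Hg i j h. induction h; [apply Hg | exact (lt_trans _ _ _ IHh (Hg _))]. Qed.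

Lemma increasing_seq_le (g : nat -> T) :
  (forall k, lt (g k) (g (S k))) -> forall i j, i <= j -> le (g i) (g j).
Proof.
  intros Hg i j h. destruct (Nat.eq_dec i j) as [->|hne]; [apply le_refl|].
  left. apply increasing_seq_lt; [exact Hg | lia].
Qed.

Lemma club_max_below C x : club lt C -> (exists d, C d /\ le d x) ->
  exists m, C m /\ le m x /\ forall d, C d -> le d x -> le d m.
Proof.
  intros [_ HCc] [d0 [Cd0 hd0]].
  destruct (lt_wf_min (fun b => forall d, C d -> le d x -> le d b) (ex_intro _ x (fun d _ h => h)))
    as [b [Hb Hmin]].
  assert (hbx : le b x) by (apply not_lt_le; intro h; exact (Hmin x (fun d _ h' => h') h)).
  exists b. split; [|exact (conj hbx Hb)].
  apply NNPP. intro nCb. apply nCb, HCc.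
  - exists d0. split; [exact Cd0|]. destruct (Hb d0 Cd0 hd0) as [h| ->]; [exact h | contradiction].
  - intros a ha. apply NNPP; intro N. apply (Hmin a); [|exact ha].
    intros d Cd hd. apply not_lt_le. intro had. apply N. exists d. split; [exact Cd|].
    split; [exact had|]. destruct (Hb d Cd hd) as [h| ->]; [exact h | contradiction].
Qed.

Lemma club_next C x : club lt C -> exists m, C m /\ lt x m /\ forall d, C d -> lt x d -> le m d.
Proof.
  intros [HCu _]. destruct (lt_wf_min (fun m => C m /\ lt x m) (HCu x)) as [m [[Cm hm] Hmin]].
  exists m. repeat split; [exact Cm | exact hm|].
  intros d Cd hd. apply not_lt_le. intro h. exact (Hmin d (conj Cd hd) h).
Qed.

Definition closed_under (R : T -> T -> T -> Prop) (b : T) : Prop :=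
  forall u w, lt u b -> lt w b -> (exists y, R u w y) -> exists y, lt y b /\ R u w y.

Lemma witnesses_bounded (R : T -> T -> T -> Prop) g :
  exists b, forall u w, lt u g -> lt w g -> (exists y, R u w y) -> exists y, lt y b /\ R u w y.
Proof.
  destruct omega1_inhabited as [t].
  set (wit := fun u w => epsilon (inhabits t) (R u w)).
  destruct (choice _ (fun u => segment_image_bounded (wit u) g)) as [bu Hbu].
  destruct (segment_image_bounded bu g) as [b Hb].
  exists b. intros u w hu hw he. exists (wit u w).
  split; [exact (lt_trans _ _ _ (Hbu u w hw) (Hb u hu)) | exact (epsilon_spec _ _ he)].
Qed.

Lemma club_above_witnesses (C : T -> Prop) (R : T -> T -> T -> Prop) g : club lt C ->
  exists c, C c /\ lt g c /\
    forall u w, lt u g -> lt w g -> (exists y, R u w y) -> exists y, lt y c /\ R u w y.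
Proof.
  intros [HCu _]. destruct (witnesses_bounded R g) as [b Hb].
  destruct (upper_bound2 g b) as [m [hg hb]]. destruct (HCu m) as [c [Cc hm]].
  exists c. split; [exact Cc|]. split; [exact (lt_trans _ _ _ hg hm)|].
  intros u w hu hw he. destruct (Hb u w hu hw he) as [y [hy Ry]].
  exists y. split; [exact (lt_trans _ _ _ hy (lt_trans _ _ _ hb hm)) | exact Ry].
Qed.

(* Unboundedness: close off under witnesses along an omega-sequence of club points. *)
Lemma closure_club (C : T -> Prop) (R : T -> T -> T -> Prop) :
  club lt C -> club lt (fun b => C b /\ closed_under R b).
Proof.
  intros HC. destruct (choice _ (fun g => club_above_witnesses C R g HC)) as [nxt Hnxt].
  destruct HC as [_ HCc]. split.
  - intro a. set (g := fun k => Nat.iter k nxt a).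
    assert (Hg : forall k, lt (g k) (g (S k))) by (intro k; apply Hnxt).
    destruct (seq_sup g) as [b [Hb Hsup]].
    exists b. split; [split|exact (Hb 0)].
    + apply HCc; [exists (g 1); split; [apply Hnxt | apply Hb]|].
      intros a' ha'. destruct (Hsup a' ha') as [k hk]. exists (g (S k)).
      split; [apply Hnxt|]. split; [exact (le_lt_trans _ _ _ hk (Hg k)) | apply Hb].
    + intros u w hu hw he. destruct (Hsup u hu) as [i hi]. destruct (Hsup w hw) as [j hj].
      assert (Hbelow : forall v l, le v (g l) -> l <= max i j -> lt v (g (S (max i j)))).
      { intros v l hv hl. apply (le_lt_trans _ _ _ hv).
        apply (lt_le_trans _ _ _ (Hg l)). apply increasing_seq_le; [exact Hg | lia]. }
      destruct (proj2 (proj2 (Hnxt (g (S (max i j))))) u w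
                  (Hbelow u i hi (Nat.le_max_l _ _)) (Hbelow w j hj (Nat.le_max_r _ _)) he)
        as [y [hy Ry]].
      exists y. split; [exact (lt_trans _ _ _ hy (Hb (S (S (max i j))))) | exact Ry].
  - intros b [c [[Cc _] hc]] Hlim. split.
    + apply HCc; [exists c; split; assumption|].
      intros a ha. destruct (Hlim a ha) as [c' [[Cc' _] h]]. exists c'. split; assumption.
    + intros u w hu hw he. destruct (le_total u w) as [h|h].
      * destruct (Hlim w hw) as [c' [[_ Hc'] [h1 h2]]].
        destruct (Hc' u w (le_lt_trans _ _ _ h h1) h1 he) as [y [hy Ry]].
        exists y. split; [exact (lt_trans _ _ _ hy h2) | exact Ry].
      * destruct (Hlim u hu) as [c' [[_ Hc'] [h1 h2]]].
        destruct (Hc' u w h1 (le_lt_trans _ _ _ h h1) he) as [y [hy Ry]].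
        exists y. split; [exact (lt_trans _ _ _ hy h2) | exact Ry].
Qed.

Lemma card_lt_nat : card_lt nat T.
Proof.
  destruct omega1_inhabited as [t].
  destruct (choice _ (fun a => upper_bound2 a a)) as [nx Hnx].
  set (g := fun n => Nat.iter n nx t).
  assert (Hg : forall k, lt (g k) (g (S k))) by (intro k; apply Hnx).
  split; [|exact (om_uncountable _ _ HT)].
  exists g. intros m n e.
  destruct (Nat.lt_trichotomy m n) as [h|[h|h]]; [|exact h|];
    apply (increasing_seq_lt g Hg) in h; rewrite e in h; exact (False_ind _ (lt_irrefl _ h)).
Qed.

Lemma increasing_into_cofinal (P : T -> Prop) : (forall b, exists a, P a /\ le b a) ->
  exists h : T -> T, (forall x, P (h x)) /\ forall x y, lt x y -> lt (h x) (h y).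
Proof.
  intro HP. destruct omega1_inhabited as [t].
  set (Phi := fun x s => epsilon (inhabits t) (fun a => P a /\ forall y, lt y x -> lt (s y) a)).
  destruct (wf_recursion lt (om_wf _ _ HT) t Phi) as [h Hh].
  assert (Hspec : forall x, P (h x) /\ forall y, lt y x -> lt (h y) (h x)).
  { intro x. rewrite (Hh x). unfold Phi.
    destruct (epsilon_spec (inhabits t)
                (fun a => P a /\ forall y, lt y x -> lt (restrict lt x t h y) a)) as [h1 h2].
    - destruct (segment_image_bounded h x) as [b Hb]. destruct (HP b) as [a [Pa hba]].
      exists a. split; [exact Pa|]. intros y hy. rewrite restrict_below by exact hy.
      exact (lt_le_trans _ _ _ (Hb y hy) hba).
    - split; [exact h1|]. intros y hy. rewrite <- (restrict_below lt x t h y hy). exact (h2 y hy). }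
  exists h. split; [intro x; apply Hspec | intros x y hxy; exact (proj2 (Hspec y) x hxy)].
Qed.

(* An injection of [K] into [T] has bounded range, since otherwise [T] would embed into [K]. *)
Lemma card_lt_countable (K : Type) : card_lt K T -> exists h : K -> nat, injective_fun h.
Proof.
  intros [[i Hi] Hno].
  assert (Hbnd : exists b, forall k, lt (i k) b).
  { apply NNPP; intro N. apply Hno.
    destruct (increasing_into_cofinal (fun a => exists k, i k = a)) as [h [Hh Hmono]].
    { intro b. apply NNPP; intro N'. apply N. exists b. intro k. apply NNPP; intro hk.
      apply N'. exists (i k). split; [now exists k | now apply not_lt_le]. }
    destruct (choice _ Hh) as [g Hg].
    exists g. intros x y e. apply (strict_mono_injective h Hmono). now rewrite <- Hg, <- Hg, e. }
  destruct Hbnd as [b Hb]. exists (fun k => seg_index b (i k)).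
  intros x y e. apply Hi. exact (seg_index_inj _ _ _ (Hb x) (Hb y) e).
Qed.

Section ClubColouring.
Variables (H : T -> T -> Prop) (C : T -> Prop).
Hypotheses (HH : undirected_graph H) (HC : club lt C)
  (Hfin : forall x d, C d -> le d x -> exists l, forall y, H x y -> lt y d -> In y l).

Definition club_succ x : T := proj1_sig (constructive_indefinite_description _ (club_next C x HC)).

Lemma club_succ_spec x :
  C (club_succ x) /\ lt x (club_succ x) /\ forall d, C d -> lt x d -> le (club_succ x) d.
Proof. exact (proj2_sig (constructive_indefinite_description _ (club_next C x HC))). Qed.

Lemma club_succ_le y x : lt y x -> club_succ y <> club_succ x -> le (club_succ y) x.
Proof.
  intros hyx hne. apply not_lt_le. intro hx. apply hne.
  destruct (club_succ_spec y) as [Cy [_ miny]]. destruct (club_succ_spec x) as [Cx [hx' minx]].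
  apply le_antisym;
    [apply miny; [exact Cx | exact (lt_trans _ _ _ hyx hx')] | apply minx; assumption].
Qed.

Lemma earlier_blocks_finite x :
  exists l, forall y, H x y -> lt y x -> club_succ y <> club_succ x -> In y l.
Proof.
  destruct (classic (exists d, C d /\ le d x)) as [hd|hd].
  - destruct (club_max_below C x HC hd) as [m [Cm [hmx hmax]]].
    destruct (Hfin x m Cm hmx) as [l Hl]. exists l. intros y hxy hyx hne. apply Hl; [exact hxy|].
    destruct (club_succ_spec y) as [Cs [hys _]].
    exact (lt_le_trans _ _ _ hys (hmax _ Cs (club_succ_le y x hyx hne))).
  - exists []. intros y _ hyx hne. exfalso. apply hd. exists (club_succ y).
    split; [apply club_succ_spec | exact (club_succ_le y x hyx hne)].
Qed.

Definition earlier_block x : list T :=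
  proj1_sig (constructive_indefinite_description _ (earlier_blocks_finite x)).

(* Colour [x] by its index below [club_succ x] and by its height in the finite
   neighbourhood relation towards earlier blocks. *)
Lemma club_locally_finite_colorable : colorable_by H nat.
Proof.
  destruct (wf_recursion lt (om_wf _ _ HT) 0 (fun x k => S (list_max (map k (earlier_block x)))))
    as [k Hk].
  assert (Hdec : forall x y, H x y -> lt y x -> club_succ y <> club_succ x -> k y < k x).
  { intros x y hxy hyx hne. rewrite (Hk x), <- (restrict_below lt x 0 k y hyx).
    apply Nat.lt_succ_r, le_list_max, in_map.
    exact (proj2_sig (constructive_indefinite_description _ (earlier_blocks_finite x))
             y hxy hyx hne). }
  set (col := fun x => Cantor.to_nat (seg_index (club_succ x) x, k x)).
  assert (Hlt : forall u v, H u v -> lt u v -> col u <> col v).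
  { intros u v huv hlt e. apply cantor_pair_inj in e. injection e as e1 e2.
    destruct (classic (club_succ u = club_succ v)) as [es|es].
    - assert (hu : lt u (club_succ v)) by (rewrite <- es; apply club_succ_spec).
      rewrite es in e1.
      rewrite (seg_index_inj _ _ _ hu (proj1 (proj2 (club_succ_spec v))) e1) in hlt.
      exact (lt_irrefl v hlt).
    - pose proof (Hdec v u (proj1 HH _ _ huv) hlt es). lia. }
  exists col. intros u v huv. destruct (om_total _ _ HT u v) as [h|[<-|h]].
  - exact (Hlt u v huv h).
  - exfalso. exact (proj2 HH u huv).
  - intro e. exact (Hlt v u (proj1 HH _ _ huv) h (eq_sym e)).
Qed.

End ClubColouring.

Section Orientation.
Variables (Sd : T -> nat -> T -> Prop) (G : T -> T -> Prop).
Hypotheses (HSd : guesses_on_club lt Sd) (HG : undirected_graph G).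

(* [s x y = true] for [y < x] means the edge [xy] is oriented [y -> x]. *)
Definition arc (s : T -> T -> bool) a b : Prop :=
  G a b /\ (lt a b /\ s b a = true \/ lt b a /\ s a b = false).

Lemma arc_orientation s : orientation G (arc s).
Proof.
  destruct HG as [Hsym Hirr]. split; [intros u v [h _]; exact h|].
  intros u v guv. split.
  - destruct (om_total _ _ HT u v) as [h|[<-|h]]; [| exfalso; exact (Hirr u guv) |].
    + destruct (s v u) eqn:E; [left | right]; split; auto.
    + destruct (s u v) eqn:E; [right | left]; split; auto.
  - intros [[_ [[h1 h2]|[h1 h2]]] [_ [[h3 h4]|[h3 h4]]]];
      try exact (lt_irrefl _ (lt_trans _ _ _ h1 h3)); congruence.
Qed.

Lemma arc_neq s a b : arc s a b -> a <> b.
Proof. intros [g _] ->. exact (proj2 HG b g). Qed.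

Lemma arc_restrict s x dflt a b :
  lt a x -> lt b x -> (arc (restrict lt x dflt s) a b <-> arc s a b).
Proof. intros ha hb. unfold arc. rewrite !restrict_below by assumption. reflexivity. Qed.

Definition le_enum x : nat -> T :=
  proj1_sig (constructive_indefinite_description _ (segment_enumerable x)).

(* The [j]-th guess at [x] is [Sd d m] cut down to [x], with [j] coding [d <= x] and [m]. *)
Definition guess x j : T -> Prop :=
  fun a => Sd (le_enum x (fst (Cantor.of_nat j))) (snd (Cantor.of_nat j)) a /\ lt a x.

Lemma guess_complete x d m : le d x -> exists j, forall a, guess x j a <-> Sd d m a /\ lt a x.
Proof.
  intro hd. destruct (proj2_sig (constructive_indefinite_description _ (segment_enumerable x)) d hd)
    as [k hk].
  exists (Cantor.to_nat (k, m)). intro a. unfold guess. rewrite Cantor.cancel_of_to. simpl.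
  unfold le_enum. rewrite hk. reflexivity.
Qed.

Definition fresh x (L : list (T * bool)) j a : Prop :=
  G x a /\ guess x j a /\ ~ In a (map fst L).

Definition fresh_pair x L j (p : T * T) : Prop :=
  fresh x L j (fst p) /\ fresh x L j (snd p) /\ fst p <> snd p.

(* Orienting [a -> x -> b] closes the cycle [x -> b -> y -> a -> x]. *)
Definition closing_pair s x L j (p : T * T) : Prop :=
  fresh_pair x L j p /\ exists y, guess x j y /\ arc s (snd p) y /\ arc s y (fst p).

Definition decide (p : T * T) (L : list (T * bool)) : list (T * bool) :=
  (fst p, true) :: (snd p, false) :: L.

Definition step s x j L : list (T * bool) :=
  match choose_opt (closing_pair s x L j) with
  | Some p => decide p L
  | None => match choose_opt (fresh_pair x L j) with Some p => decide p L | None => L end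
  end.

Fixpoint decisions s x j : list (T * bool) :=
  match j with 0 => [] | S j => step s x j (decisions s x j) end.

Definition orient_at x (s : T -> T -> bool) : T -> bool :=
  fun y => if excluded_middle_informative (exists j, In (y, true) (decisions s x j))
           then true else false.

Lemma step_cases s x j L :
  step s x j L = L \/ exists p, fresh_pair x L j p /\ step s x j L = decide p L.
Proof.
  unfold step. pose proof (choose_opt_spec (closing_pair s x L j)) as Hc.
  destruct (choose_opt (closing_pair s x L j)) as [p|];
    [right; exists p; split; [apply Hc | reflexivity]|].
  pose proof (choose_opt_spec (fresh_pair x L j)) as Hf.
  destruct (choose_opt (fresh_pair x L j)) as [p|]; [right; now exists p | now left].
Qed.

Lemma step_spec s x j L : (exists p, fresh_pair x L j p) ->
  exists p, fresh_pair x L j p /\ step s x j L = decide p L /\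
    ((exists q, closing_pair s x L j q) -> closing_pair s x L j p).
Proof.
  intro hf. unfold step. pose proof (choose_opt_spec (closing_pair s x L j)) as Hc.
  destruct (choose_opt (closing_pair s x L j)) as [p|].
  - exists p. split; [apply Hc|]. split; [reflexivity | intros _; exact Hc].
  - pose proof (choose_opt_spec (fresh_pair x L j)) as Hf.
    destruct (choose_opt (fresh_pair x L j)) as [p|]; [|contradiction].
    exists p. split; [exact Hf|]. split; [reflexivity | intro hq; contradiction].
Qed.

Lemma decisions_incl s x j j' e : j <= j' -> In e (decisions s x j) -> In e (decisions s x j').
Proof.
  induction 1 as [|j' _ IH]; [tauto|]. intro h. simpl.
  destruct (step_cases s x j' (decisions s x j')) as [-> | [p [_ ->]]]; simpl; auto.
Qed.

Lemma decisions_nodup s x j : NoDup (map fst (decisions s x j)).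
Proof.
  induction j as [|j IH]; simpl; [constructor|].
  destruct (step_cases s x j (decisions s x j)) as [-> | [p [[[_ [_ ha]] [[_ [_ hb]] hab]] ->]]];
    [exact IH|].
  simpl. constructor; [simpl; intros [h|h]; auto | constructor; auto].
Qed.

Lemma orient_at_decided s x j y b : In (y, b) (decisions s x j) -> orient_at x s y = b.
Proof.
  intro h. unfold orient_at. destruct (excluded_middle_informative _) as [[j' h']|h'].
  - apply (nodup_fst_functional (decisions s x (max j j')) y);
      [apply decisions_nodup
      | eapply decisions_incl; [|exact h'] | eapply decisions_incl; [|exact h]];
      lia.
  - destruct b; [exfalso; eauto | reflexivity].
Qed.

Section Dicolouring.
Variables (sg : T -> T -> bool) (c : T -> nat).
Hypotheses (Hsg : forall x, sg x = orient_at x (restrict lt x (fun _ => true) sg))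
  (Hac : forall n, acyclic_set (arc sg) (fun v => c v = n)).

Definition mono_path n u w y : Prop := c y = n /\ arc sg u y /\ arc sg y w.

Lemma colour_club_exists n : exists C, club lt C /\ forall d, C d ->
  (exists m, forall a, Sd d m a <-> c a = n /\ lt a d) /\ closed_under (mono_path n) d.
Proof.
  destruct (HSd (fun a => c a = n)) as [C0 [HC0 HSC0]].
  exists (fun d => C0 d /\ closed_under (mono_path n) d).
  split; [exact (closure_club C0 _ HC0) | intros d [h1 h2]; exact (conj (HSC0 d h1) h2)].
Qed.

Definition colour_club n : T -> Prop :=
  proj1_sig (constructive_indefinite_description _ (colour_club_exists n)).

Lemma colour_club_spec n : club lt (colour_club n) /\ forall d, colour_club n d ->
  (exists m, forall a, Sd d m a <-> c a = n /\ lt a d) /\ closed_under (mono_path n) d.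
Proof. exact (proj2_sig (constructive_indefinite_description _ (colour_club_exists n))). Qed.

Definition sg_below x : T -> T -> bool := restrict lt x (fun _ => true) sg.

Lemma decided_pair_arcs x j p :
  fresh_pair x (decisions (sg_below x) x j) j p ->
  step (sg_below x) x j (decisions (sg_below x) x j) = decide p (decisions (sg_below x) x j) ->
  arc sg (fst p) x /\ arc sg x (snd p).
Proof.
  intros [[ga [[_ ha] _]] [[gb [[_ hb] _]] _]] e.
  assert (Hdec : forall y b, In (y, b) (decide p (decisions (sg_below x) x j)) -> sg x y = b).
  { intros y b h. rewrite Hsg. apply (orient_at_decided (sg_below x) x (S j)).
    cbn [decisions]. now rewrite e. }
  split; split.
  - exact (proj1 HG _ _ ga).
  - left. split; [exact ha | apply Hdec; left; reflexivity].
  - exact gb.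
  - right. split; [exact hb | apply Hdec; right; left; reflexivity].
Qed.

Lemma chosen_closing_pair_absurd x j p :
  (forall a, guess x j a -> c a = c x) ->
  closing_pair (sg_below x) x (decisions (sg_below x) x j) j p ->
  step (sg_below x) x j (decisions (sg_below x) x j) = decide p (decisions (sg_below x) x j) ->
  False.
Proof.
  intros Hcol [Hp [y [py [hby hya]]]] e.
  destruct (decided_pair_arcs x j p Hp e) as [hax hxb].
  destruct p as [a b]. destruct Hp as [[_ [pa _]] [[_ [pb _]] hab]]. simpl in *.
  pose proof (proj2 pa) as lax. pose proof (proj2 pb) as lbx. pose proof (proj2 py) as lyx.
  apply arc_restrict in hby; [|assumption|assumption].
  apply arc_restrict in hya; [|assumption|assumption].
  apply (Hac (c x)). apply (has_dcycle_in_4 _ _ x b y a);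
    [| reflexivity | exact (Hcol b pb) | exact (Hcol y py) | exact (Hcol a pa)
     | exact hxb | exact hby | exact hya | exact hax].
  repeat constructor; simpl.
  - intros [h|[h|[h|[]]]]; subst; eapply lt_irrefl; eassumption.
  - intros [h|[h|[]]]; [exact (arc_neq _ _ _ hby (eq_sym h)) | exact (hab h)].
  - intros [h|[]]. exact (arc_neq _ _ _ hya (eq_sym h)).
  - intros [].
Qed.

(* At the stage guessing the colour class of [x] below [d], a fresh pair [a -> x -> b] yields,
   by closure of [d], some [a -> y -> b] in that class; so [(b, a)] is a closing pair, hence a
   closing pair is chosen, and it makes a monochromatic 4-cycle. *)
Lemma few_same_colour_neighbours x d : colour_club (c x) d -> le d x ->
  exists l, forall y, G x y -> c y = c x -> lt y d -> In y l.
Proof.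
  intros Hd hdx. destruct (proj2 (colour_club_spec (c x)) d Hd) as [[m Hm] Hcl].
  destruct (guess_complete x d m hdx) as [j Hj].
  assert (Hgj : forall a, guess x j a <-> c a = c x /\ lt a d).
  { intro a. rewrite Hj, Hm. split; [tauto|].
    intros [h1 h2]. exact (conj (conj h1 h2) (lt_le_trans _ _ _ h2 hdx)). }
  apply NNPP; intro Ninf.
  assert (Ninf' : ~ exists l, forall y, (G x y /\ c y = c x /\ lt y d) -> In y l)
    by (intros [l hl]; apply Ninf; exists l; auto).
  set (L := decisions (sg_below x) x j).
  assert (Hfresh : exists p, fresh_pair x L j p).
  { destruct (infinite_avoid _ Ninf' (map fst L)) as [a [[ga ha] na]].
    destruct (infinite_avoid _ Ninf' (a :: map fst L)) as [b [[gb hb] nb]].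
    exists (a, b). split; [|split]; simpl.
    - split; [exact ga | split; [now apply Hgj | exact na]].
    - split; [exact gb | split; [now apply Hgj | intro h; apply nb; now right]].
    - intros ->. apply nb. now left. }
  destruct (step_spec (sg_below x) x j L Hfresh) as [[a b] [Hp [e Hclose]]].
  apply (chosen_closing_pair_absurd x j (a, b) (fun a h => proj1 (proj1 (Hgj a) h))); [|exact e].
  apply Hclose.
  destruct (decided_pair_arcs x j (a, b) Hp e) as [hax hxb].
  destruct Hp as [[ga [pa na]] [[gb [pb nb]] hab]]. simpl in *.
  destruct (Hcl a b (proj2 (proj1 (Hgj a) pa)) (proj2 (proj1 (Hgj b) pb))
              (ex_intro _ x (conj eq_refl (conj hax hxb)))) as [y [hyd [cy [hay hyb]]]].
  pose proof (lt_le_trans _ _ _ hyd hdx) as lyx.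
  pose proof (proj2 pa) as lax. pose proof (proj2 pb) as lbx.
  exists (b, a). split.
  - split; [|split]; simpl; [exact (conj gb (conj pb nb)) | exact (conj ga (conj pa na)) | auto].
  - exists y. split; [now apply Hgj | split; apply arc_restrict; assumption].
Qed.

End Dicolouring.

Theorem orientation_forcing_countable_colouring : exists D, orientation G D /\
  forall c : T -> nat, (forall n, acyclic_set D (fun v => c v = n)) -> colorable_by G nat.
Proof.
  destruct (wf_recursion lt (om_wf _ _ HT) (fun _ => true) orient_at) as [sg Hsg].
  exists (arc sg). split; [apply arc_orientation|]. intros c Hac.
  apply (colorable_nat_of_classes G c). intro n.
  apply (club_locally_finite_colorable _ (colour_club sg c n)).
  - destruct HG as [Hsym Hirr].
    split; [intros u v [h [hu hv]]; auto | intros v [h _]; exact (Hirr v h)].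
  - exact (proj1 (colour_club_spec sg c n)).
  - intros x d Hd hdx. destruct (Nat.eq_dec (c x) n) as [<-|hn].
    + destruct (few_same_colour_neighbours _ _ Hsg Hac x d Hd hdx) as [l Hl].
      exists l. intros y [gxy [_ cy]] hy. exact (Hl y gxy cy hy).
    + exists []. intros y [_ [cx _]]. contradiction.
Qed.

End Orientation.

End Omega1.

Section Pullback.
Variables (W V : Type) (lt : W -> W -> Prop) (f : V -> W).
Hypothesis Hf : bijective_fun f.

Definition lt_via (u v : V) : Prop := lt (f u) (f v).

Lemma is_omega1_pullback : is_omega1 W lt -> is_omega1 V lt_via.
Proof.
  intros [h1 h2 h3 h4 h5 h6]. destruct (choice _ (proj2 Hf)) as [g Hg].
  constructor; unfold lt_via.
  - intro a. apply h1.
  - intros a b c. apply h2.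
  - intros a b. destruct (h3 (f a) (f b)) as [h|[h|h]];
      [now left | right; left; exact (proj1 Hf _ _ h) | now right; right].
  - exact (wf_inverse_image V W lt f h4).
  - intros [k Hk]. apply h5. exists (fun w => k (g w)). intros x y e.
    rewrite <- (Hg x), <- (Hg y), (Hk _ _ e). reflexivity.
  - intro b. destruct (h6 (f b)) as [k Hk].
    exists (fun p : {a : V | lt (f a) (f b)} => k (exist _ (f (proj1_sig p)) (proj2_sig p))).
    intros [x px] [y py] e. apply Hk in e. injection e as e. apply (proj1 Hf) in e. subst.
    f_equal. apply proof_irrelevance.
Qed.

Lemma guesses_on_club_pullback (Sd : W -> nat -> W -> Prop) :
  guesses_on_club lt Sd -> guesses_on_club lt_via (fun b n a => Sd (f b) n (f a)).
Proof.
  intro HSd. destruct (choice _ (proj2 Hf)) as [g Hg].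
  assert (Hgf : forall v, g (f v) = v) by (intro v; apply (proj1 Hf), Hg).
  intro X. destruct (HSd (fun w => X (g w))) as [C [[Cu Cc] HC]].
  exists (fun v => C (f v)). split; [split|]; unfold lt_via.
  - intro a. destruct (Cu (f a)) as [c [hc hl]]. exists (g c). rewrite Hg. split; assumption.
  - intros b [c [hc hl]] hlim. apply Cc; [exists (f c); split; assumption|].
    intros a ha. destruct (hlim (g a)) as [c' [hc' [h1 h2]]]; [now rewrite Hg|].
    rewrite Hg in h1. exists (f c'). split; [|split]; assumption.
  - intros b hb. destruct (HC (f b) hb) as [n Hn]. exists n. intro a.
    rewrite Hn, Hgf. reflexivity.
Qed.

End Pullback.

Theorem corollary4p9 (W : Type) (lt : W -> W -> Prop)
  (HW : is_omega1 W lt) (Hdiamond : diamond_plus W lt)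
  (V : Type) (G : V -> V -> Prop) (HG : undirected_graph G)
  (HV : exists f : V -> W, bijective_fun f) :
  vec_chi_eq G W <-> chi_eq G W.
Proof.
  destruct HV as [f Hf].
  pose proof (colorable_by_injection G f (proj2 HG) (proj1 Hf)) as Hcol.
  split.
  - intros [_ Hvec]. split; [exact Hcol|].
    intros K HK HGK. destruct (Hvec K HK) as [D [HD HnD]].
    exact (HnD (dicolorable_of_colorable G D HD HGK)).
  - intros [_ Hchi]. split; [intros D HD; exact (dicolorable_of_colorable G D HD Hcol)|].
    intros K HK.
    destruct (diamond_plus_guesses lt Hdiamond) as [Sd HSd].
    destruct (orientation_forcing_countable_colouring V (lt_via W V lt f)
                (is_omega1_pullback W V lt f Hf HW) _ G
                (guesses_on_club_pullback W V lt f Hf Sd HSd) HG) as [D [HD Hforce]].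
    exists D. split; [exact HD|]. intro HDK.
    destruct (card_lt_countable W lt HW K HK) as [h Hh].
    destruct (dicolorable_nat_of_countable D h Hh HDK) as [c Hc].
    exact (Hchi nat (card_lt_nat W lt HW) (Hforce c Hc)).
Qed.
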